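(* Let $F$ be a positive integer and let $\mathrm{G}(F)$ be the graph whose vertex set is $\mathrm{Sat}(F)$ and in which $(S,T)\in\mathrm{Sat}(F)\times\mathrm{Sat}(F)$ is an edge if and only if $T=S\setminus\{\mathrm{m}(S)\}$. Then $\mathrm{G}(F)$ is a tree with root $\Delta(F+1)$, i.e. for every vertex $S\neq\Delta(F+1)$ there is a unique path in $\mathrm{G}(F)$ connecting $S$ to $\Delta(F+1)$.
   Context: A numerical semigroup is a subset $S\subseteq\mathbb{N}$ closed under addition, containing $0$, with $\mathbb{N}\setminus S$ finite. Its Frobenius number $\mathrm{F}(S)$ is the largest integer not in $S$, and its multiplicity $\mathrm{m}(S)$ is $\min(S\setminus\{0\})$. For $A\subseteq\mathbb{N}$ and $a\in A$, let $\mathrm{d}_A(a)=\gcd\{x\in A\mid x\le a\}$. A numerical semigroup $S$ is saturated if $s+\mathrm{d}_S(s)\in S$ for all $s\in S\setminus\{0\}$. For a positive integer $F$, $\mathrm{Sat}(F)$ denotes the set of all saturated numerical semigroups $S$ with $\mathrm{F}(S)=F$. For $m\in\mathbb{N}$, $\Delta(m)=\{0\}\cup\{x\in\mathbb{N}\mid x\ge m\}$. A path of length $n$ from $x$ to $y$ in a graph is a sequence of distinct edges $(v_0,v_1),(v_1,v_2),\dots,(v_{n-1},v_n)$ with $v_0=x$, $v_n=y$. *)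

(* Subsets of N are represented as boolean predicates nat -> bool;
   equality of subsets is Leibniz equality of functions. *)
From mathcomp Require Import all_boot.
Set Implicit Arguments. Unset Strict Implicit. Unset Printing Implicit Defensive.

Definition nset := nat -> bool.

Definition numerical_semigroup (S : nset) : Prop :=
  [/\ S 0, (forall x y, S x -> S y -> S (x + y)) & exists N, forall x, N <= x -> S x].

Definition is_frobenius (S : nset) (F : nat) : Prop :=
  ~~ S F /\ (forall x, F < x -> S x).

Definition is_multiplicity (S : nset) (m : nat) : Prop :=
  [/\ S m, 0 < m & forall x, S x -> 0 < x -> m <= x].

Definition dA (A : nset) (a : nat) : nat := \big[gcdn/0]_(0 <= x < a.+1 | A x) x.

Definition saturated (S : nset) : Prop :=
  forall s, S s -> s != 0 -> S (s + dA S s).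

Definition Sat (F : nat) (S : nset) : Prop :=
  [/\ numerical_semigroup S, saturated S & is_frobenius S F].

Definition Delta (m : nat) : nset := fun x => (x == 0) || (m <= x).

Definition remove (S : nset) (a : nat) : nset := fun x => S x && (x != a).

Definition GF_edge (F : nat) (S T : nset) : Prop :=
  Sat F S /\ Sat F T /\ exists m, is_multiplicity S m /\ T = remove S m.

(* A path from x to y: the vertex list x :: p (v_0 = x, ..., v_n = last x p = y),
   consecutive vertices form edges of G(F), and the edges are pairwise distinct. *)
Definition is_GF_path (F : nat) (x y : nset) (p : seq nset) : Prop :=
  let v := fun i => nth x (x :: p) i in
  [/\ last x p = y,
      (forall i, i < size p -> GF_edge F (v i) (v i.+1)) &
      (forall i j, i < j -> j < size p -> (v i, v i.+1) <> (v j, v j.+1))].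

From mathcomp Require Import all_boot.
From mathcomp Require Import zify.
From Stdlib Require Import FunctionalExtensionality Classical.

Set Implicit Arguments. Unset Strict Implicit. Unset Printing Implicit Defensive.

(* Every S in Sat(F) other than Delta(F+1) has its multiplicity m < F, and
   removing m yields again an element of Sat(F): the semigroup axioms are kept
   because m is the least positive element, and saturation is kept because
   d_S(s) divides d_{S \ {m}}(s), while a saturated semigroup contains s + z
   for every multiple z of d_S(s).  Hence each vertex S <> Delta(F+1) has
   exactly one outgoing edge (the multiplicity is unique), Delta(F+1) has none,
   and the multiplicity strictly increases along edges.
   Uniqueness of paths to Delta(F+1) follows by induction on the path, since
   the edge relation is functional and the target has no outgoing edge.
   Existence follows by induction on F - m(S); the edges of the path so built
   are pairwise distinct because all later vertices lie inside S \ {m(S)}. *)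

Lemma dvd_dA (A : nset) a x : x <= a -> A x -> dA A a %| x.
Proof.
move=> le_xa Ax; rewrite /dA (big_rem x) /=; last by rewrite mem_index_iota; lia.
by rewrite Ax dvdn_gcdl.
Qed.

Lemma dA_dvd (A : nset) a d : (forall x, x <= a -> A x -> d %| x) -> d %| dA A a.
Proof.
move=> dvd_d; rewrite /dA big_seq_cond; apply: (big_ind (fun g => d %| g)) => //.
  by move=> u v du dv; rewrite dvdn_gcd du dv.
by move=> i /andP[]; rewrite mem_index_iota => lt_i Ai; apply: dvd_d => //; lia.
Qed.

Lemma dA_gt0 (A : nset) s : A s -> 0 < s -> 0 < dA A s.
Proof.
move=> As s_gt0; have := @dvd_dA A s s (leqnn s) As.
by case: (dA A s) => //; rewrite dvd0n; lia.
Qed.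

Lemma dA_sub (A B : nset) a : (forall x, A x -> B x) -> dA B a %| dA A a.
Proof. by move=> sAB; apply: dA_dvd => x le_xa /sAB; apply: dvd_dA. Qed.

Lemma dA_mono (A : nset) a b : a <= b -> dA A b %| dA A a.
Proof. by move=> le_ab; apply: dA_dvd => x le_xa; apply: dvd_dA; lia. Qed.

Lemma saturated_dvd (S : nset) s z :
  saturated S -> S s -> s != 0 -> dA S s %| z -> S (s + z).
Proof.
move=> satS; elim/ltn_ind: z s => z IH s Ss s_neq0 dvd_z.
have [->|z_gt0] := posnP z; first by rewrite addn0.
have d_gt0 : 0 < dA S s by apply: dA_gt0 => //; lia.
have le_dz : dA S s <= z by apply: dvdn_leq.
have Ss' : S (s + dA S s) by apply: satS.
have dvd_d' : dA S (s + dA S s) %| dA S s by apply: dA_mono; lia.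
have -> : s + z = s + dA S s + (z - dA S s) by lia.
apply: IH Ss' _ _; [lia | lia |].
by apply: dvdn_trans dvd_d' _; rewrite dvdn_sub.
Qed.

Lemma mult_exists (S : nset) F : is_frobenius S F -> exists m, is_multiplicity S m.
Proof.
move=> [_ above_F].
have ex_pos : exists x, S x && (0 < x) by exists F.+1; rewrite above_F.
case: (ex_minnP ex_pos) => m /andP[Sm m_gt0] min_m; exists m; split => //.
by move=> x Sx x_gt0; apply: min_m; rewrite Sx x_gt0.
Qed.

Lemma mult_unique (S : nset) m1 m2 :
  is_multiplicity S m1 -> is_multiplicity S m2 -> m1 = m2.
Proof.
move=> [S1 pos1 min1] [S2 pos2 min2].
by have := min1 _ S2 pos2; have := min2 _ S1 pos1; lia.
Qed.

Lemma mult_remove_gt (S : nset) m m' :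
  is_multiplicity S m -> is_multiplicity (remove S m) m' -> m < m'.
Proof.
move=> [_ _ min_m] [/andP[Sm' neq_m'm] m'_gt0 _].
by have := min_m _ Sm' m'_gt0; lia.
Qed.

Lemma remove_numerical (S : nset) m :
  numerical_semigroup S -> is_multiplicity S m -> numerical_semigroup (remove S m).
Proof.
move=> [S0 addS [N above_N]] [Sm m_gt0 min_m]; split.
- by rewrite /remove S0; lia.
- move=> x y /andP[Sx neq_xm] /andP[Sy neq_ym]; rewrite /remove addS //=.
  have [->|x_gt0] := posnP x; first by [].
  have [->|y_gt0] := posnP y; first by rewrite addn0.
  by have := min_m _ Sx x_gt0; have := min_m _ Sy y_gt0; lia.
- by exists (N + m.+1) => x le_x; rewrite /remove above_N /=; lia.
Qed.

(* Removing the multiplicity keeps saturation, by dA_sub and saturated_dvd. *)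
Lemma remove_saturated (S : nset) m :
  saturated S -> is_multiplicity S m -> saturated (remove S m).
Proof.
move=> satS [_ _ min_m] s /andP[Ss neq_sm] s_neq0; apply/andP; split.
  by apply: saturated_dvd => //; apply: dA_sub => x /andP[].
by have := min_m _ Ss ltac:(lia); lia.
Qed.

Lemma remove_frobenius (S : nset) m F :
  is_frobenius S F -> m < F -> is_frobenius (remove S m) F.
Proof.
move=> [notSF above_F] lt_mF; split; first by rewrite /remove negb_and notSF.
by move=> x lt_Fx; rewrite /remove above_F //=; lia.
Qed.

Section SaturatedTree.
Variable F : nat.
Notation D := (Delta F.+1).

Lemma Sat_Delta : 0 < F -> Sat F D.
Proof.
move=> F_gt0; rewrite /Sat /Delta; split.
- split => //; last by exists F.+1 => x le_x; apply/orP; right.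
  by move=> x y /orP[/eqP->|hx] /orP[/eqP->|hy]; apply/orP; lia.
- by move=> s /orP[/eqP->//|hs] _; apply/orP; right; lia.
- by split => [|x lt_Fx]; apply/orP; lia.
Qed.

Lemma mult_lt_frobenius S m : Sat F S -> is_multiplicity S m -> S <> D -> m < F.
Proof.
move=> [[S0 _ _] _ [notSF above_F]] [Sm m_gt0 min_m] neq_SD.
have neq_mF : m != F by apply: contraNneq notSF => <-.
suff : m <= F by lia.
case: (leqP m F) => // lt_Fm; exfalso; apply: neq_SD.
apply: functional_extensionality => x; rewrite /Delta.
have [->|x_gt0] := posnP x; first by rewrite S0.
case: (leqP x F) => le_xF /=; last by rewrite above_F.
by apply/negP => Sx; have := min_m _ Sx x_gt0; lia.
Qed.

Lemma edge_remove_mult S m :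
  Sat F S -> is_multiplicity S m -> S <> D -> GF_edge F S (remove S m).
Proof.
move=> SatS mult_m neq_SD; have lt_mF := mult_lt_frobenius SatS mult_m neq_SD.
case: (SatS) => numS satS frobS; split => //; split; last by exists m.
split; [exact: remove_numerical | exact: remove_saturated | exact: remove_frobenius].
Qed.

(* The root Delta(F+1) has no outgoing edge: its multiplicity exceeds F. *)
Lemma Delta_no_edge T : ~ GF_edge F D T.
Proof.
move=> [_ [SatT [m [[Dm m_gt0 _] eq_T]]]]; subst T.
have [_ _ [_ above_F]] := SatT.
have lt_Fm : F < m by move: Dm; rewrite /Delta => /orP[/eqP|]; lia.
by have := above_F m lt_Fm; rewrite /remove eqxx andbF.
Qed.

Lemma edge_functional S T T' : GF_edge F S T -> GF_edge F S T' -> T = T'.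
Proof.
move=> [_ [_ [m [mult_m ->]]]] [_ [_ [m' [mult_m' ->]]]].
by rewrite (mult_unique mult_m mult_m').
Qed.

Lemma edge_sub S T x : GF_edge F S T -> T x -> S x.
Proof. by move=> [_ [_ [m [_ ->]]]] /andP[]. Qed.

(* Paths are decomposed along their first edge; this reindexes the vertices
   of x :: z :: p as those of z :: p. *)
Lemma nth_cons_shift (x z : nset) p k :
  k <= size p -> nth x [:: x, z & p] k.+1 = nth z (z :: p) k.
Proof. by move=> le_k; apply: set_nth_default. Qed.

Lemma path_nil x y : is_GF_path F x y [::] -> x = y.
Proof. by case. Qed.

Lemma path_cons x y z p :
  is_GF_path F x y (z :: p) -> GF_edge F x z /\ is_GF_path F z y p.
Proof.
move=> [last_p edges distinct]; split; first exact: (edges 0).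
split => // [i lt_i | i j lt_ij lt_j].
- by have := edges i.+1 lt_i; rewrite !nth_cons_shift //; lia.
- by have := distinct i.+1 j.+1 lt_ij lt_j; rewrite !nth_cons_shift //; lia.
Qed.

Lemma path_cons_intro x y z p :
  GF_edge F x z -> is_GF_path F z y p ->
  (forall j, j < size p -> x <> nth z (z :: p) j) ->
  is_GF_path F x y (z :: p).
Proof.
move=> edge_xz [last_p edges distinct] fresh_x.
split => // [[|i] lt_i | [|i] [|j] // lt_ij lt_j].
- exact: edge_xz.
- by rewrite !nth_cons_shift; try (simpl in *; lia); apply: edges.
- rewrite !nth_cons_shift; try (simpl in *; lia).
  by move=> [eq_x _]; apply: (fresh_x j) => //; simpl in *; lia.
- by rewrite !nth_cons_shift; try (simpl in *; lia); apply: distinct.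
Qed.

Lemma path_vertex_sub x y p k a :
  is_GF_path F x y p -> k <= size p -> nth x (x :: p) k a -> x a.
Proof.
elim: p x k => [|z p IH] x [|k] // path_xp le_k.
have [edge_xz path_zp] := path_cons path_xp.
rewrite nth_cons_shift // => /(IH _ _ path_zp le_k).
exact: edge_sub.
Qed.

(* Uniqueness: both paths must follow the unique outgoing edges until the root. *)
Lemma path_unique S p q : is_GF_path F S D p -> is_GF_path F S D q -> p = q.
Proof.
elim: p S q => [|z p IH] S [|w q] //.
- by move=> /path_nil -> /path_cons [/Delta_no_edge].
- by move=> /path_cons [edge_Sz _] /path_nil eq_SD; rewrite eq_SD in edge_Sz;
    case: (Delta_no_edge edge_Sz).
- move=> /path_cons [edge_Sz path_z] /path_cons [edge_Sw path_w].
  have eq_zw := edge_functional edge_Sz edge_Sw; subst w.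
  by rewrite (IH _ _ path_z path_w).
Qed.

Lemma path_exists n S m :
  Sat F S -> is_multiplicity S m -> F - m < n -> exists p, is_GF_path F S D p.
Proof.
elim: n S m => [|n IH] S m SatS mult_m lt_n; first by lia.
have [->|neq_SD] := classic (S = D); first by exists [::]; split.
have edge_ST := edge_remove_mult SatS mult_m neq_SD.
have [_ [SatT _]] := edge_ST.
have [_ _ frobT] := SatT; have [m' mult_m'] := mult_exists frobT.
have lt_mm' := mult_remove_gt mult_m mult_m'.
have lt_mF := mult_lt_frobenius SatS mult_m neq_SD.
have [p path_p] := IH _ _ SatT mult_m' ltac:(lia).
exists (remove S m :: p); apply: path_cons_intro => // j lt_j eq_S.
have Sm : S m by case: mult_m.
have := path_vertex_sub path_p (ltnW lt_j); rewrite -eq_S => /(_ m Sm).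
by rewrite /remove eqxx andbF.
Qed.

End SaturatedTree.

Theorem proposition17 (F : nat) (HF : 0 < F) :
  Sat F (Delta F.+1) /\
  (forall S : nset, Sat F S -> S <> Delta F.+1 ->
     exists! p : seq nset, is_GF_path F S (Delta F.+1) p).
Proof.
split; first exact: Sat_Delta.
move=> S SatS _.
have [_ _ frobS] := SatS; have [m mult_m] := mult_exists frobS.
have [p path_p] := path_exists SatS mult_m (ltnSn (F - m)).
by exists p; split => // q path_q; apply: path_unique path_p path_q.
Qed.
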